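(* Let $n,x$ be integers with $1<x<n$, so that $G=C_{2n}(x,1,n)$ is a $5$-regular circulant graph. If $x=\tfrac{n}{2}$, then $G$ is word-representable and $R(G)\leq 5$.
   Context: Two distinct letters $x,y$ alternate in a word $w$ if, after deleting all other letters from $w$, the resulting word is of the form $xyxy\cdots$ or $yxyx\cdots$ (of even or odd length). A graph $G=(V,E)$ is word-representable if there is a word $w$ over the alphabet $V$, containing every letter of $V$ at least once, such that for all distinct $x,y\in V$, $xy\in E$ if and only if $x$ and $y$ alternate in $w$. A word is $k$-uniform if every letter occurs in it exactly $k$ times; $G$ is $k$-representable if some $k$-uniform word represents it, and the representation number $R(G)$ of a word-representable graph $G$ is the least such $k$. For an integer $m$ and a set $R$ of positive integers each at most $m/2$, the circulant graph $C_m(R)$ has vertex set $\{0,1,\dots,m-1\}$, with $i$ and $j$ adjacent iff $\min(|i-j|,\,m-|i-j|)\in R$. $C_{2n}(x,1,n)$ denotes the circulant graph on $2n$ vertices with jump set $\{1,x,n\}$; it is $5$-regular exactly when $1<x<n$. *)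

From mathcomp Require Import all_boot.
Set Implicit Arguments. Unset Strict Implicit. Unset Printing Implicit Defensive.

(* x and y alternate in w: after deleting all letters other than x, y,
   the resulting word has no two equal consecutive letters
   (i.e. it is of the form xyxy... or yxyx..., possibly empty). *)
Definition alternate (T : finType) (w : seq T) (x y : T) : bool :=
  let u := [seq z <- w | (z == x) || (z == y)] in
  sorted (fun a b => a != b) u.

Definition represents (T : finType) (E : rel T) (w : seq T) : Prop :=
  (forall v : T, v \in w) /\
  (forall x y : T, x != y -> (E x y <-> alternate w x y)).

Definition word_representable (T : finType) (E : rel T) : Prop :=
  exists w : seq T, represents E w.

Definition uniform (T : finType) (k : nat) (w : seq T) : bool :=
  [forall v : T, count_mem v w == k].

Definition k_representable (T : finType) (E : rel T) (k : nat) : Prop :=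
  exists w : seq T, uniform k w /\ represents E w.

Definition circ_dist (m i j : nat) : nat :=
  let d := if i <= j then j - i else i - j in minn d (m - d).

Definition circulant (m : nat) (R : seq nat) : rel 'I_m :=
  fun i j => (i != j) && (circ_dist m i j \in R).

Definition C2n (n x : nat) : rel 'I_(2 * n) := @circulant (2 * n) [:: 1; x; n].

(* Over Z_4x take the word made of the blocks [t; t-1; t+x; t+2x; t+3x],
   t = 0, ..., 4x-1.  Adding 1 to every letter rotates the word by one block,
   so every letter occurs five times and whether u and v alternate depends
   only on v - u.  The neighbours 1, x, 2x of 0 alternate with 0, as one reads
   off the few blocks containing the two letters, and so do 3x and -1 by the
   symmetry d |-> -d.  Any other letter d is missing from the stretch between
   the first two occurrences of 0, in blocks 0 and 1. *)

From mathcomp Require Import all_boot zify.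
Set Implicit Arguments. Unset Strict Implicit. Unset Printing Implicit Defensive.

Lemma filter_cons_true (T : Type) (p : pred T) a s : p a -> filter p (a :: s) = a :: filter p s.
Proof. by move=> /= ->. Qed.

Lemma filter_cons_false (T : Type) (p : pred T) a s : ~~ p a -> filter p (a :: s) = filter p s.
Proof. by move=> /= /negbTE ->. Qed.

Lemma flatten_map_filter (T : Type) (U : eqType) (f : U -> seq T) (q : pred U) (s : seq U) :
  {in s, forall t, ~~ q t -> f t = [::]} ->
  flatten [seq f t | t <- s & q t] = flatten [seq f t | t <- s].
Proof.
elim: s => //= t s IH f_nil.
rewrite -IH => [|u u_s]; last by apply: f_nil; rewrite inE u_s orbT.
by case: ifP => //= /negbT/f_nil ->; rewrite ?inE ?eqxx.
Qed.

Lemma filter_flatten_sparse (T : Type) (p : pred T) (f : nat -> seq T) m (L : seq nat) :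
  sorted ltn L -> all (gtn m) L -> (forall t, t < m -> t \notin L -> ~~ has p (f t)) ->
  filter p (flatten [seq f t | t <- iota 0 m]) = flatten [seq filter p (f t) | t <- L].
Proof.
move=> L_sorted L_lt_m f_sparse.
have -> : L = [seq t <- iota 0 m | t \in L].
  apply: (irr_sorted_eq ltn_trans ltnn) => //.
    exact/sorted_filter/iota_ltn_sorted/ltn_trans.
  move=> t; rewrite mem_filter mem_iota /=.
  by case: (boolP (t \in L)) => // /(allP L_lt_m).
rewrite filter_flatten -map_comp flatten_map_filter // => t.
rewrite mem_iota => t_lt_m /(f_sparse t t_lt_m).
by rewrite has_count -size_filter lt0n negbK => /eqP/size0nil.
Qed.

Lemma filter_rot (U : Type) (p : pred U) k (s : seq U) :
  exists k', filter p (rot k s) = rot k' (filter p s).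
Proof.
exists (size (filter p (take k s))).
by rewrite /rot filter_cat -rot_size_cat -filter_cat cat_take_drop.
Qed.

Lemma sum_count_mem (T : finType) (s : seq T) : \sum_(v : T) count_mem v s = size s.
Proof.
elim: s => [|a s IH] /=; first by rewrite big1.
rewrite big_split /= IH (bigD1 a) //= eqxx big1 // => v.
by rewrite eq_sym => /negbTE->.
Qed.

Section Alternation.

Variable T : finType.
Implicit Types (w : seq T) (a b : T).

Lemma alternate_sym w a b : alternate w a b = alternate w b a.
Proof. by rewrite /alternate; congr sorted; apply: eq_filter => z; rewrite orbC. Qed.

Lemma alternate_map (f : T -> T) w a b :
  injective f -> alternate (map f w) (f a) (f b) = alternate w a b.
Proof.
move=> f_inj; rewrite /alternate filter_map sorted_map.
under eq_filter => z do rewrite /= !(inj_eq f_inj).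
by apply: eq_sorted => u v /=; rewrite (inj_eq f_inj).
Qed.

Lemma count_alternating_path a b s :
  a != b -> all (mem [:: a; b]) s -> path (fun u v => u != v) a s ->
  count_mem a (a :: s) = count_mem b (a :: s) + (last a s == a).
Proof.
elim: s a b => [|c s IH] a b neq_ab /=; first by rewrite eqxx (negbTE neq_ab).
rewrite !inE => /andP[/orP[/eqP-> | /eqP->] s_ab] /andP[neq_ac s_path].
  by rewrite eqxx in neq_ac.
have s_ba : all (mem [:: b; a]) s by apply: sub_all s_ab => z; rewrite !inE orbC.
have := IH b a; rewrite eq_sym => /(_ neq_ab s_ba s_path).
have : last b s \in [:: a; b].
  by have := mem_last b s; rewrite inE => /orP[/eqP-> | /(allP s_ab)]; rewrite ?inE ?eqxx ?orbT.
rewrite !inE /= !eqxx (eq_sym b a) (negbTE neq_ab).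
case/orP=> /eqP->; rewrite ?eqxx ?(eq_sym b a) ?(negbTE neq_ab); lia.
Qed.

Lemma alternating_sorted_cycle a b s :
  a != b -> all (mem [:: a; b]) s -> count_mem a s = count_mem b s ->
  sorted (fun u v => u != v) s = cycle (fun u v => u != v) s.
Proof.
move=> neq_ab; case: s => [|c s] //= /andP[c_ab s_ab] cnt.
have [c' neq_cc' [s_cc' cnt_cc']] : exists2 c', c != c' &
    all (mem [:: c; c']) s /\ count_mem c (c :: s) = count_mem c' (c :: s).
  move: c_ab cnt; rewrite !inE => /orP[] /eqP-> /=.
  - by exists b => //; split=> //; lia.
  - exists a; rewrite 1?eq_sym //; split; first by apply: sub_all s_ab => z; rewrite !inE orbC.
    by rewrite !eqxx (eq_sym b a) (negbTE neq_ab) in cnt *; lia.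
rewrite rcons_path; case s_path: path => //=.
have := count_alternating_path neq_cc' s_cc' s_path.
by rewrite cnt_cc'; case: (last c s == c) => //=; lia.
Qed.

Lemma alternate_rot k w a b :
  a != b -> count_mem a w = count_mem b w -> alternate (rot k w) a b = alternate w a b.
Proof.
move=> neq_ab cnt; rewrite /alternate.
have [k' ->] := filter_rot (fun z => (z == a) || (z == b)) k w.
set s := filter _ w.
have s_ab : all (mem [:: a; b]) s.
  by apply/allP => z; rewrite mem_filter !inE => /andP[].
have cnt_s : count_mem a s = count_mem b s.
  have count_s c : (c == a) || (c == b) -> count_mem c s = count_mem c w.
    by move=> c_ab; rewrite count_filter; apply: eq_count => z /=; case: eqP => // ->.
  by rewrite !count_s ?eqxx ?orbT.
rewrite (alternating_sorted_cycle neq_ab s_ab cnt_s).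
rewrite (alternating_sorted_cycle neq_ab) ?rot_cycle //.
- by apply/allP => z; rewrite mem_rot => /(allP s_ab).
- have /permP cnt_rot : perm_eq (rot k' s) s by rewrite perm_rot.
  by rewrite !cnt_rot.
Qed.

Lemma not_alternate_repeat w s a b :
  a \notin s -> b \notin s -> ~~ alternate (a :: s ++ a :: w) a b.
Proof.
move=> a_s b_s; rewrite /alternate /= eqxx /= filter_cat.
rewrite (@eq_in_filter _ _ pred0 s) ?filter_pred0 /=; first by rewrite eqxx /= eqxx.
move=> z z_s /=; apply/negbTE; rewrite negb_or.
by apply/andP; split; [apply: contraNneq a_s | apply: contraNneq b_s] => <-.
Qed.

End Alternation.

Section CyclicWord.

Variable m : nat.
Hypothesis m_gt0 : 0 < m.

Definition inZm k : 'I_m := Ordinal (ltn_pmod k m_gt0).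

Lemma inZm_eqE k j : (inZm k == inZm j) = (k %% m == j %% m).
Proof. by []. Qed.

Lemma inZm_val (v : 'I_m) : inZm v = v.
Proof. by apply: val_inj; rewrite /= modn_small. Qed.

Lemma inZm_mod k : inZm (k %% m) = inZm k.
Proof. by apply: val_inj; rewrite /= modn_mod. Qed.

Lemma inZmDl k : inZm (m + k) = inZm k.
Proof. by apply: val_inj; rewrite /= modnDl. Qed.

Lemma ordS_inZm k : ordS (inZm k) = inZm k.+1.
Proof. by apply: val_inj; rewrite /= -addn1 modnDml addn1. Qed.

Variable offs : seq nat.

Definition cyclic_block t := [seq inZm (t + o) | o <- offs].

Definition cyclic_word := flatten [seq cyclic_block t | t <- iota 0 m].

Lemma map_ordS_cyclic_word : map (@ordS m) cyclic_word = rot (size offs) cyclic_word.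
Proof.
have block_ordS t : map (@ordS m) (cyclic_block t) = cyclic_block t.+1.
  by rewrite -map_comp; apply: eq_map => o /=; rewrite ordS_inZm.
have block_m : cyclic_block m = cyclic_block 0.
  by apply: eq_map => o; rewrite add0n inZmDl.
rewrite /cyclic_word map_flatten -map_comp (eq_map block_ordS).
have -> : [seq cyclic_block t.+1 | t <- iota 0 m] = [seq cyclic_block t | t <- iota 1 m].
  by rewrite (iotaDl 1 0) -map_comp.
have iota0 : iota 0 m = 0 :: iota 1 m.-1 by rewrite -{1}(prednK m_gt0).
have iota1 : iota 1 m = iota 1 m.-1 ++ [:: m].
  by rewrite -{1}(prednK m_gt0) -[m.-1.+1]addn1 iotaD add1n prednK.
rewrite iota0 iota1 map_cat flatten_cat /= cats0 block_m.
by rewrite -(size_map (fun o => inZm (0 + o))) rot_size_cat.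
Qed.

Lemma count_cyclic_word_ordS v :
  count_mem (ordS v) cyclic_word = count_mem v cyclic_word.
Proof.
have /permP cnt_rot : perm_eq (rot (size offs) cyclic_word) cyclic_word by rewrite perm_rot.
rewrite -cnt_rot -map_ordS_cyclic_word count_map.
by apply: eq_count => z /=; rewrite (inj_eq (@ordS_inj m)).
Qed.

Lemma count_cyclic_word v : count_mem v cyclic_word = size offs.
Proof.
have cnt_0 u : count_mem u cyclic_word = count_mem (inZm 0) cyclic_word.
  rewrite -(inZm_val u); elim: (val u) => // k IH.
  by rewrite -ordS_inZm count_cyclic_word_ordS.
have : \sum_(u : 'I_m) count_mem u cyclic_word = m * size offs.
  rewrite sum_count_mem size_flatten /shape -map_comp.
  rewrite (eq_map (g := fun=> size offs)) => [|t]; last by rewrite /= size_map.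
  by rewrite sumnE big_map big_const_seq count_predT size_iota iter_addn_0 mulnC.
under eq_bigr => u _ do rewrite cnt_0.
by rewrite sum_nat_const card_ord cnt_0 => /eqP; rewrite eqn_pmul2l // => /eqP.
Qed.

Lemma alternate_cyclic_wordD a b k : inZm a != inZm b ->
  alternate cyclic_word (inZm (a + k)) (inZm (b + k)) =
  alternate cyclic_word (inZm a) (inZm b).
Proof.
move=> neq_ab; elim: k => [|k IH]; first by rewrite !addn0.
have neq_k : inZm (a + k) != inZm (b + k) by rewrite inZm_eqE eqn_modDr.
rewrite !addnS -!ordS_inZm -(alternate_rot (size offs)) ?count_cyclic_word //; last first.
  by rewrite (inj_eq (@ordS_inj m)).
by rewrite -map_ordS_cyclic_word alternate_map //; apply: ordS_inj.
Qed.

Lemma alternate_cyclic_word0 (u v : 'I_m) : u != v ->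
  alternate cyclic_word u v = alternate cyclic_word (inZm 0) (inZm ((v + (m - u)) %% m)).
Proof.
move=> neq_uv; rewrite inZm_mod -{1}(inZm_val u) -{1}(inZm_val v).
rewrite -(alternate_cyclic_wordD (m - u)) ?inZm_val //; congr alternate.
by apply: val_inj; rewrite /= subnKC ?modnn ?mod0n // ltnW.
Qed.

Lemma alternate_cyclic_word_opp d : 0 < d < m ->
  alternate cyclic_word (inZm 0) (inZm d) = alternate cyclic_word (inZm 0) (inZm (m - d)).
Proof.
case/andP=> d_gt0 d_lt_m.
have neq_0d : inZm 0 != inZm d by rewrite inZm_eqE mod0n modn_small // eq_sym -lt0n.
rewrite -(alternate_cyclic_wordD (m - d) neq_0d) alternate_sym; congr alternate.
by apply: val_inj; rewrite /= subnKC ?modnn ?mod0n // ltnW.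
Qed.

Lemma cyclic_word_prefix : 1 < m ->
  exists w, cyclic_word = cyclic_block 0 ++ cyclic_block 1 ++ w.
Proof.
move=> m_gt1; exists (flatten [seq cyclic_block t | t <- iota 2 (m - 2)]).
by rewrite /cyclic_word (_ : iota 0 m = [:: 0, 1 & iota 2 (m - 2)]) // -{1}(subnKC m_gt1).
Qed.

End CyclicWord.

Lemma modn_cases k m : k < 2 * m -> k < m /\ k %% m = k \/ m <= k /\ k %% m = k - m.
Proof.
case: (ltnP k m) => [k_lt_m | m_le_k] k_lt_2m; [left | right]; split=> //.
  exact: modn_small.
by rewrite -{1}(subnK m_le_k) modnDr modn_small //; lia.
Qed.

(* Each [k %% m] in the goal must satisfy [k < 2 * m]: it is replaced by [k]
   or [k - m] before calling [lia]. *)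
Ltac mod_lia :=
  intros; repeat match goal with |- context [?k %% ?m] =>
    let r := fresh "r" in
    have := @modn_cases k m ltac:(lia); generalize (k %% m) => r
  end; lia.

Lemma circ_distE m (u v : 'I_m) :
  circ_dist m u v = minn ((v + (m - u)) %% m) (m - (v + (m - u)) %% m).
Proof.
by have := ltn_ord u; have := ltn_ord v; rewrite /circ_dist /=; case: (leqP u v); mod_lia.
Qed.

Fact half_jump_order_gt0 x : 1 < x -> 0 < 2 * (2 * x).
Proof. lia. Qed.

Definition half_jump_word x (x_gt1 : 1 < x) :=
  cyclic_word (half_jump_order_gt0 x_gt1) [:: 0; (2 * (2 * x)).-1; x; 2 * x; 3 * x].

(* For x = 2 the blocks 2 and x coincide, so the block list used in
   [alternate_half_jump_word_1] is not increasing. *)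
Lemma alternate_half_jump_word_two_1 x (x_gt1 : 1 < x) : x = 2 ->
  alternate (half_jump_word x_gt1)
    (inZm (half_jump_order_gt0 x_gt1) 0) (inZm (half_jump_order_gt0 x_gt1) 1).
Proof. by move=> x2; subst x; vm_compute. Qed.

Section HalfJumpWord.

Variable x : nat.
Hypothesis x_gt1 : 1 < x.

Local Notation m := (2 * (2 * x)).
Local Notation z := (inZm (half_jump_order_gt0 x_gt1)).
Local Notation W := (half_jump_word x_gt1).

Local Arguments filter : simpl never.

Ltac eval_filter :=
  repeat first
    [ rewrite filter_cons_true; last by cbv beta; rewrite !inZm_eqE; mod_lia
    | rewrite filter_cons_false; last by cbv beta; rewrite !inZm_eqE; mod_lia ];
  rewrite /filter /=.

(* [L] lists, in increasing order, the blocks containing [z 0] or the other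
   letter; the letters read off these blocks are then checked to alternate. *)
Ltac alternate_by_blocks L :=
  rewrite /alternate /half_jump_word /cyclic_word (@filter_flatten_sparse _ _ _ _ L);
  [ rewrite /cyclic_block /=; eval_filter; rewrite !inZm_eqE; mod_lia
  | rewrite /=; lia
  | rewrite /=; lia
  | move=> t t_lt_m; rewrite !inE => t_notin_L;
    rewrite /cyclic_block /= !inZm_eqE !negb_or ?mod0n; repeat (apply/andP; split); mod_lia ].

Lemma alternate_half_jump_word_1 : alternate W (z 0) (z 1).
Proof.
have [x_gt2 | x_le2] := ltnP 2 x; last by apply: alternate_half_jump_word_two_1; lia.
by alternate_by_blocks [:: 0; 1; 2; x; x.+1; 2 * x; (2 * x).+1; 3 * x; (3 * x).+1].
Qed.

Lemma alternate_half_jump_word_x : alternate W (z 0) (z x).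
Proof. by alternate_by_blocks [:: 0; 1; x; x.+1; 2 * x; 3 * x]. Qed.

Lemma alternate_half_jump_word_2x : alternate W (z 0) (z (2 * x)).
Proof. by alternate_by_blocks [:: 0; 1; x; 2 * x; (2 * x).+1; 3 * x]. Qed.

Lemma not_alternate_half_jump_word d : 0 < d < m ->
  d \notin [:: 1; x; 2 * x; 3 * x; m.-1] -> ~~ alternate W (z 0) (z d).
Proof.
move=> d_range d_nonadj; rewrite /half_jump_word.
have [w ->] :=
  cyclic_word_prefix (half_jump_order_gt0 x_gt1) [:: 0; m.-1; x; 2 * x; 3 * x] ltac:(lia).
have z_m : z (1 + m.-1) = z 0 by rewrite (_ : 1 + m.-1 = m + 0) ?inZmDl //; lia.
rewrite /cyclic_block /= z_m.
apply: (@not_alternate_repeat _ _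
          [:: z (0 + m.-1); z (0 + x); z (0 + 2 * x); z (0 + 3 * x); z (1 + 0)]);
  move: d_nonadj; rewrite !inE !inZm_eqE !negb_or => /and5P[? ? ? ? ?]; rewrite ?mod0n;
  repeat (apply/andP; split); mod_lia.
Qed.

Lemma alternate_half_jump_word0 d : 0 < d < m ->
  alternate W (z 0) (z d) = (minn d (m - d) \in [:: 1; x; 2 * x]).
Proof.
move=> d_range; have [d_adj | d_nonadj] := boolP (d \in [:: 1; x; 2 * x; 3 * x; m.-1]).
  have -> : minn d (m - d) \in [:: 1; x; 2 * x] by move: d_adj; rewrite !inE; lia.
  move: d_adj; rewrite !inE => /or4P[| | | /orP[]] /eqP d_eq; rewrite d_eq.
  - exact: alternate_half_jump_word_1.
  - exact: alternate_half_jump_word_x.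
  - exact: alternate_half_jump_word_2x.
  - rewrite alternate_cyclic_word_opp; last lia.
    by rewrite (_ : m - 3 * x = x); [exact: alternate_half_jump_word_x | lia].
  - rewrite alternate_cyclic_word_opp; last lia.
    by rewrite (_ : m - m.-1 = 1); [exact: alternate_half_jump_word_1 | lia].
rewrite (negbTE (not_alternate_half_jump_word d_range d_nonadj)).
by apply/esym/negbTE; move: d_nonadj; rewrite !inE; lia.
Qed.

End HalfJumpWord.

Theorem theorem28 (n x : nat) :
  1 < x -> x < n -> n = 2 * x ->
  word_representable (@C2n n x) /\
  exists k : nat, k <= 5 /\ k_representable (@C2n n x) k.
Proof.
move=> x_gt1 _ ->.
have rep : represents (@C2n (2 * x) x) (half_jump_word x_gt1).
  split=> [v | u v neq_uv]; first by rewrite -has_pred1 has_count count_cyclic_word.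
  suff -> : @C2n (2 * x) x u v = alternate (half_jump_word x_gt1) u v by [].
  rewrite /C2n /circulant neq_uv circ_distE alternate_cyclic_word0 // alternate_half_jump_word0 //.
  by have := ltn_ord u; have := ltn_ord v; move: neq_uv; rewrite -val_eqE /=; mod_lia.
split; first by exists (half_jump_word x_gt1).
exists 5; split=> //; exists (half_jump_word x_gt1); split=> //.
by apply/forallP => v; rewrite count_cyclic_word.
Qed.
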